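(* Let $n\ge 2$, $k\ge 1$, $I=\{0,\ldots,n-1\}$. Let $\tilde S_n(k)$ be the set of bijections $u$ of $\mathbb{Z}/kn\mathbb{Z}$ such that $u(j+n)=u(j)+n$ for all $j\in\mathbb{Z}/kn\mathbb{Z}$ and $\sum_{i=1}^n u(i)\equiv\binom{n+1}{2}\pmod{kn}$. Then: (1) $\tilde S_n(k)$ is well defined, i.e. it is a group under composition; (2) the map $\varphi:\tilde S_n\to\tilde S_n(k)$, $\varphi([a_1,\ldots,a_n])=[a_1\bmod kn,\ldots,a_n\bmod kn]$ (i.e. $\varphi(u)(j\bmod kn)=u(j)\bmod kn$), is a homomorphism, and $\tilde S_n(k)$ is isomorphic to the quotient $\tilde S_n/\ker\varphi$; (3) with $N=\ker\varphi$, $N\cap K_{\{i\}}=\{e\}$ for every $i\in I$, where $K_{\{i\}}=\langle\tilde s_j:j\in I,\ j\ne i\rangle$; (4) $|\tilde S_n(k)|=k^{n-1}\,n!$.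
   Context: $\tilde S_n$ is the group (under composition) of all bijections $u:\mathbb{Z}\to\mathbb{Z}$ with $u(j+n)=u(j)+n$ for all $j$ and $\sum_{i=1}^n u(i)=\binom{n+1}{2}$, written $u=[u(1),\ldots,u(n)]$. Its generators are $\tilde s_i=[1,\ldots,i-1,i+1,i,i+2,\ldots,n]$ for $1\le i\le n-1$ and $\tilde s_0=[0,2,\ldots,n-1,n+1]$. Elements of $\tilde S_n(k)$ are likewise written $[u(1),\ldots,u(n)]$. *)

From HB Require Import structures.
From mathcomp Require Import all_boot all_order all_fingroup all_algebra.
Unset Printing Implicit Defensive.
Import Order.TTheory GRing.Theory Num.Theory.
Local Open Scope ring_scope.

Definition affperm (n : nat) (u : int -> int) : Prop :=
  bijective u /\
  (forall j : int, u (j + n%:Z) = u j + n%:Z) /\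
  \sum_(1 <= i < n.+1) u i%:Z = ('C(n.+1, 2))%:Z.

Definition Sk (k n : nat) : {set {perm 'Z_(k * n)}} :=
  [set p : {perm 'Z_(k * n)} |
     [forall j : 'Z_(k * n), p (j + n%:R) == p j + n%:R] &&
     (\sum_(i < n) p (i.+1)%:R == ('C(n.+1, 2))%:R)].

(* phi(u)(j mod kn) = u(j) mod kn, computed on the representative
   j in {0,..,kn-1} of the residue class. *)
Definition phif (k n : nat) (u : int -> int) (x : 'Z_(k * n)) : 'Z_(k * n) :=
  (u (nat_of_ord x)%:Z)%:~R.

Definition kerphi (k n : nat) (u : int -> int) : Prop :=
  affperm n u /\ forall x, phif k n u x = x.

(* generators \tilde s_i, i in {0,..,n-1}:
   \tilde s_i(j) = j+1 if j = i mod n, j-1 if j = i+1 mod n, j otherwise.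
   (For 1 <= i <= n-1 this is [1,..,i+1,i,..,n]; for i = 0 it is
   [0,2,...,n-1,n+1].) *)
Definition sgen (n i : nat) (j : int) : int :=
  if (j %% n%:Z)%Z == i%:Z then j + 1
  else if (j %% n%:Z)%Z == ((i.+1)%:Z %% n%:Z)%Z then j - 1
  else j.

Inductive gen_by (S : (int -> int) -> Prop) : (int -> int) -> Prop :=
| gen_id : forall f, (forall j, f j = j) -> gen_by S f
| gen_mul : forall s f h, S s -> gen_by S f ->
    (forall j, h j = s (f j)) -> gen_by S h
| gen_mulinv : forall s g f h, S s ->
    (forall j, s (g j) = j) -> (forall j, g (s j) = j) ->
    gen_by S f -> (forall j, h j = g (f j)) -> gen_by S h.

Definition Kgen (n i : nat) : (int -> int) -> Prop :=
  gen_by (fun s => exists2 j : nat, (j < n)%N /\ j <> i &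
                     forall x, s x = sgen n j x).

From HB Require Import structures.
From mathcomp Require Import all_boot all_order all_fingroup all_algebra.
From mathcomp Require Import ring zify.
Set Implicit Arguments.
Unset Strict Implicit.
Unset Printing Implicit Defensive.
Import Order.TTheory GRing.Theory Num.Theory.
Local Open Scope ring_scope.

(* An affine permutation u is determined by its window u 0, ..., u (n-1), since
   u j = j + (u r - r) for r the residue of j mod n.  The conditions defining
   \tilde S_n say that the window entries have pairwise distinct residues mod n
   and that the offset \sum_r (u r - r) vanishes; the offset is additive under
   composition.  Likewise an element of \tilde S_n(k) is determined by its window,
   whose entries have distinct residues mod n and sum to binom(n,2) mod kn; such a
   window lifts to an affine permutation once one entry is corrected by a multiple
   of kn.  Hence phi is onto, and being a homomorphism it makes \tilde S_n(k) a
   group whose elements correspond to the cosets of ker phi.  Writing the window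
   entries as s_r + n l_r with s a permutation of Z/n and 0 <= l_r < k, the sum
   condition becomes k | \sum_r l_r, which leaves n! k^(n-1) windows.  Finally the
   generators of K_{i} preserve the interval (i, i+n], while an element of ker phi
   moves every point by a multiple of kn >= n: an element of both fixes that
   interval pointwise, hence fixes everything by shift equivariance. *)

Section ZpInt.
Variable m : nat.
Hypothesis m_gt1 : (1 < m)%N.

Lemma intr_Zp (z : 'Z_m) : (z : nat)%:Z%:~R = z.
Proof. by rewrite -pmulrn natr_Zp. Qed.

Lemma Zp_natr_inj a b :
  (a < m)%N -> (b < m)%N -> a%:R = b%:R :> 'Z_m -> a = b.
Proof. by move=> ha hb /(congr1 val); rewrite /= !val_Zp_nat // !modn_small. Qed.

Lemma Zp_natr_eq0 a : (a%:R == 0 :> 'Z_m) = (m %| a)%N.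
Proof. by rewrite -val_eqE /= val_Zp_nat. Qed.

Lemma Zp_intr_mulm t : (t * m%:Z)%:~R = 0 :> 'Z_m.
Proof. by rewrite intrM -pmulrn pchar_Zp // mulr0. Qed.

Lemma Zp_intrE z : ((z%:~R : 'Z_m) : nat)%:Z = (z %% m%:Z)%Z.
Proof.
have r_ge0 : 0 <= (z %% m%:Z)%Z by rewrite modz_ge0 // eqz_nat -lt0n ltnW.
have r_lt : (z %% m%:Z)%Z < m%:Z by rewrite ltz_pmod // ltz_nat ltnW.
rewrite {1}(divz_eq z m%:Z) intrD Zp_intr_mulm add0r -(gez0_abs r_ge0) -pmulrn.
by rewrite val_Zp_nat // modn_small // -ltz_nat gez0_abs.
Qed.

Lemma Zp_intr_eq a b : a%:~R = b%:~R :> 'Z_m -> exists t, a = b + t * m%:Z.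
Proof.
move=> eq_ab; have /eqP : (a - b)%:~R = 0 :> 'Z_m by rewrite intrB eq_ab subrr.
rewrite -val_eqE -eqz_nat Zp_intrE => /eqP /dvdz_mod0P /dvdzP [t ht].
by exists t; rewrite -ht addrC subrK.
Qed.

End ZpInt.

Section Windows.
Variable n' : nat.
Local Notation n := n'.+2.

Definition shift_equivariant (u : int -> int) :=
  forall j, u (j + n%:Z) = u j + n%:Z.

Lemma shift_equivariantZ u : shift_equivariant u ->
  forall t j, u (j + t * n%:Z) = u j + t * n%:Z.
Proof.
move=> hu; have hnat (q : nat) j : u (j + q%:Z * n%:Z) = u j + q%:Z * n%:Z.
  elim: q j => [|q IHq] j; first by rewrite !mul0r !addr0.
  have -> : j + q.+1%:Z * n%:Z = j + q%:Z * n%:Z + n%:Z by rewrite intS; ring.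
  by rewrite hu IHq intS; ring.
move=> t j; have [t_ge0 | t_lt0] := leP 0 t; first by rewrite -(gez0_abs t_ge0).
have := hnat `|t|%N (j + t * n%:Z); rewrite ltz0_abs //.
by rewrite (_ : j + t * n%:Z + - t * n%:Z = j) => [->|]; ring.
Qed.

Lemma shift_equivariant_comp u v :
  shift_equivariant u -> shift_equivariant v -> shift_equivariant (u \o v).
Proof. by move=> hu hv j /=; rewrite hv hu. Qed.

Lemma shift_equivariant_inv u v :
  cancel u v -> cancel v u -> shift_equivariant u -> shift_equivariant v.
Proof. by move=> uK vK hu j; apply: (can_inj uK); rewrite hu !vK. Qed.

(* ['I_n'.+2] carries the ring structure of Z/nZ. *)
Definition resn (j : int) : 'I_n := j%:~R.

Lemma resnE j : (resn j : int) = (j %% n%:Z)%Z.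
Proof. exact: (@Zp_intrE n isT). Qed.

Lemma resn_ord (r : 'I_n) : resn r = r.
Proof. exact: (@intr_Zp n). Qed.

Lemma resn_divz j : j = (resn j : int) + (j %/ n%:Z)%Z * n%:Z.
Proof. by rewrite resnE addrC -divz_eq. Qed.

Lemma resnDMn j t : resn (j + t * n%:Z) = resn j.
Proof. by rewrite /resn intrD (@Zp_intr_mulm n isT) addr0. Qed.

Lemma resnD a b : resn (a + b) = resn a + resn b.
Proof. exact: intrD. Qed.

Lemma resnB a b : resn (a - b) = resn a - resn b.
Proof. exact: intrB. Qed.

Lemma resnMn t : resn (t * n%:Z) = 0.
Proof. by rewrite -[t * _]add0r resnDMn /resn mulr0z. Qed.

Lemma resn_eq a b : resn a = resn b -> exists t, a = b + t * n%:Z.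
Proof. exact: (@Zp_intr_eq n isT). Qed.

Lemma shift_equivariant_window u : shift_equivariant u ->
  forall j, u j = j + (u (resn j) - (resn j : int)).
Proof. by move=> hu j; rewrite {1 2}(resn_divz j) shift_equivariantZ //; ring. Qed.

Lemma resn_window_inj u : shift_equivariant u -> injective u ->
  injective (fun r : 'I_n => resn (u r)).
Proof.
move=> hu u_inj r s /resn_eq [t]; rewrite -shift_equivariantZ // => /u_inj.
by move/(congr1 resn); rewrite resnDMn !resn_ord.
Qed.

Definition offset (u : int -> int) := \sum_(r < n) (u r - (r : int)).

Lemma sum_ord_int : \sum_(r < n) (r : int) = ('C(n, 2))%:Z.
Proof.
by rewrite -bin2_sum big_mkord -natz natr_sum; under eq_bigr do rewrite natz.
Qed.

Lemma offsetE u : offset u = \sum_(r < n) u r - ('C(n, 2))%:Z.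
Proof. by rewrite /offset sumrB sum_ord_int. Qed.

Lemma offset_comp u v : shift_equivariant u -> shift_equivariant v ->
  injective v -> offset (u \o v) = offset u + offset v.
Proof.
move=> hu hv v_inj.
rewrite [offset u](reindex_inj (resn_window_inj hv v_inj)) /offset -big_split /=.
by apply: eq_bigr => r _; rewrite {1}(shift_equivariant_window hu (v r)); ring.
Qed.

Lemma sum_window_shift u : shift_equivariant u ->
  \sum_(1 <= i < n.+1) u i%:Z = \sum_(r < n) u r + n%:Z.
Proof.
move=> hu; rewrite big_add1 big_mkord big_ord_recr [in RHS]big_ord_recl /=.
have -> : u n%:Z = u 0 + n%:Z by rewrite -hu add0r.
by under [in RHS]eq_bigr do rewrite /bump leq0n add1n; ring.
Qed.

Lemma affperm_sumE u : shift_equivariant u ->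
  (\sum_(1 <= i < n.+1) u i%:Z = ('C(n.+1, 2))%:Z) <-> offset u = 0.
Proof.
move=> hu; rewrite sum_window_shift // offsetE binS bin1 PoszD.
split=> [/addIr -> | /eqP]; first exact: subrr.
by rewrite subr_eq0 => /eqP ->.
Qed.

Lemma affpermP u :
  affperm n u <-> [/\ bijective u, shift_equivariant u & offset u = 0].
Proof.
split=> [[bu [hu su]] | [bu hu ou]]; first by split=> //; apply/affperm_sumE.
by split; [|split=> //; apply/affperm_sumE].
Qed.

Lemma affperm_id : affperm n id.
Proof.
by apply/affpermP; split=> //; [exists id | apply: big1 => r _; rewrite subrr].
Qed.

Lemma affperm_comp u v : affperm n u -> affperm n v -> affperm n (u \o v).
Proof.
move=> /affpermP [bu hu ou] /affpermP [bv hv ov]; apply/affpermP.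
split; [exact: bij_comp | exact: shift_equivariant_comp |].
by rewrite offset_comp ?ou ?ov ?addr0 //; exact: bij_inj.
Qed.

Lemma affperm_inv u v : cancel u v -> cancel v u -> affperm n u -> affperm n v.
Proof.
move=> uK vK /affpermP [_ hu ou]; have hv := shift_equivariant_inv uK vK hu.
apply/affpermP; split=> //; first by exists u.
have : offset (u \o v) = 0 by apply: big1 => r _; rewrite /= vK subrr.
by rewrite offset_comp ?ou ?add0r //; exact: can_inj vK.
Qed.

Definition window_ext (F : 'I_n -> int) (j : int) : int :=
  j + (F (resn j) - (resn j : int)).

Lemma window_ext_equivariant F : shift_equivariant (window_ext F).
Proof.
move=> j; rewrite /window_ext.
have -> : resn (j + n%:Z) = resn j by rewrite -(resnDMn j 1) mul1r.
ring.
Qed.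

Lemma window_ext_ord F (r : 'I_n) : window_ext F r = F r.
Proof. by rewrite /window_ext resn_ord; ring. Qed.

Lemma offset_window_ext F :
  offset (window_ext F) = \sum_(r < n) F r - ('C(n, 2))%:Z.
Proof. by rewrite offsetE; under eq_bigr do rewrite window_ext_ord. Qed.

Lemma window_ext_bij F : injective (fun r => resn (F r)) -> bijective (window_ext F).
Proof.
move=> F_inj; have [tau tauK Ktau] := injF_bij F_inj.
pose g y := y - (F (tau (resn y)) - (tau (resn y) : int)).
have resn_g y : resn (g y) = tau (resn y).
  by rewrite /g !resnB resn_ord (Ktau (resn y)); ring.
have resn_ext j : resn (window_ext F j) = resn (F (resn j)).
  by rewrite /window_ext resnD resnB resn_ord; ring.
exists g => [j | y]; last by rewrite /window_ext resn_g /g; ring.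
by rewrite /g resn_ext (tauK (resn j)) /window_ext; ring.
Qed.

Definition in_window (i : nat) (x : int) : bool :=
  (i%:Z < x) && (x <= i%:Z + n%:Z).

Lemma modz_addr_inj (a b : nat) c : (a < n)%N -> (b < n)%N ->
  ((a%:Z + c) %% n%:Z)%Z = ((b%:Z + c) %% n%:Z)%Z -> a = b.
Proof.
move=> a_lt b_lt /eqP; rewrite eqz_modDr !modz_small ?lez_nat ?ltz_nat //.
by move/eqP => [].
Qed.

(* [s_j] only exchanges j + tn and j + 1 + tn, and such a pair straddles an end of
   (i, i+n] only when j = i mod n. *)
Lemma sgen_in_window i j x : (i < n)%N -> (j < n)%N -> j <> i ->
  in_window i (sgen n j x) = in_window i x.
Proof.
move=> i_lt j_lt j_neq_i.
have off_boundary c t : (x %% n%:Z)%Z = ((j%:Z + c) %% n%:Z)%Z ->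
    x <> i%:Z + c + t * n%:Z.
  move=> hx ex; apply/j_neq_i/esym/(modz_addr_inj (c := c)) => //.
  by rewrite -hx ex [_ + t * _]addrC modzMDl.
rewrite /sgen /in_window; case: ifP => [/eqP x_j | _].
  have hx : (x %% n%:Z)%Z = ((j%:Z + 0) %% n%:Z)%Z.
    by rewrite addr0 x_j modz_small //; lia.
  have := off_boundary 0 0 hx; have := off_boundary 0 1 hx.
  rewrite !addr0 mul1r => ? ?.
  by apply/idP/idP => /andP [? ?]; apply/andP; split; lia.
case: ifP => [/eqP x_j1 | _ //].
have hx : (x %% n%:Z)%Z = ((j%:Z + 1) %% n%:Z)%Z by rewrite x_j1 intS addrC.
have := off_boundary 1 0 hx; have := off_boundary 1 1 hx.
rewrite mul1r mul0r addr0 => ? ?.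
by apply/idP/idP => /andP [? ?]; apply/andP; split; lia.
Qed.

Lemma Kgen_in_window i f : (i < n)%N -> Kgen n i f ->
  forall x, in_window i (f x) = in_window i x.
Proof.
move=> i_lt; elim=> [g g_id | s g h [j [j_lt j_neq] s_j] _ IH h_sg
                   | s s' g h [j [j_lt j_neq] s_j] ss' s's _ IH h_s'g] x.
- by rewrite g_id.
- by rewrite h_sg s_j sgen_in_window.
- by rewrite h_s'g -(sgen_in_window (s' (g x)) i_lt j_lt j_neq) -s_j ss' IH.
Qed.

Lemma in_window_translate i j : exists t, in_window i (j + t * n%:Z).
Proof.
exists (- ((j - i%:Z - 1) %/ n%:Z)%Z); rewrite mulNr.
have r_ge0 : 0 <= ((j - i%:Z - 1) %% n%:Z)%Z by rewrite modz_ge0.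
have r_lt : ((j - i%:Z - 1) %% n%:Z)%Z < n%:Z by rewrite ltz_pmod.
move: (divz_eq (j - i%:Z - 1) n%:Z) r_ge0 r_lt.
rewrite /in_window; set qn := (_ %/ _)%Z * _; set r := (_ %% _)%Z.
by move=> *; apply/andP; split; lia.
Qed.

End Windows.

Lemma card_ffun_sum_dvdn k m : (0 < k)%N ->
  #|[set l : {ffun 'I_m.+1 -> 'I_k} | (k %| \sum_i l i)%N]| = (k ^ m)%N.
Proof.
move=> k_gt0; set L := [set l | _].
pose restr (l : {ffun 'I_m.+1 -> 'I_k}) : {ffun 'I_m -> 'I_k} :=
  [ffun j => l (lift ord_max j)].
have sum_restr (l : {ffun 'I_m.+1 -> 'I_k}) :
  (\sum_i l i = l ord_max + \sum_j restr l j)%N.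
  by rewrite (bigD1_ord ord_max) //; under [in RHS]eq_bigr do rewrite ffunE.
have restr_inj : {in L &, injective restr}.
  move=> l1 l2; rewrite !inE !sum_restr => dvd1 dvd2 eq_r; apply/ffunP => i.
  case: (unliftP ord_max i) => [j -> | ->].
    by have := congr1 (fun f : {ffun 'I_m -> 'I_k} => f j) eq_r; rewrite !ffunE.
  apply: val_inj; move: dvd1 dvd2; rewrite eq_r /dvdn => /eqP d1 /eqP d2.
  have /eqP : (l1 ord_max + \sum_j restr l2 j =
               l2 ord_max + \sum_j restr l2 j %[mod k])%N by rewrite d1 d2.
  by rewrite eqn_modDr !modn_small // => /eqP.
rewrite -(card_in_imset restr_inj) (_ : restr @: L = setT).
  by rewrite cardsT card_ffun !card_ord.
apply/setP => mu; rewrite inE; apply/imsetP.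
pose S := (\sum_j mu j)%N.
pose l := [ffun i => if unlift ord_max i is Some j then mu j
                    else Ordinal (ltn_pmod (k - S %% k) k_gt0)].
have restr_l : restr l = mu by apply/ffunP => j; rewrite !ffunE liftK.
exists l => //; rewrite inE sum_restr restr_l ffunE unlift_none /= -/S.
have S_mod_le : (S %% k <= k)%N by rewrite ltnW // ltn_pmod.
by rewrite /dvdn modnDml {2}(divn_eq S k) addnCA subnK // -mulSnr modnMl.
Qed.

Section Reduction.
Variables (n' k : nat).
Hypothesis k_gt0 : (0 < k)%N.
Local Notation n := n'.+2.
Local Notation N := (k * n)%N.
Local Notation shift_equivariant := (shift_equivariant n').
Local Notation resn := (resn n').
Local Notation in_window := (in_window n').

Lemma N_gt1 : (1 < N)%N.
Proof. exact: leq_trans (leq_pmull _ k_gt0). Qed.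

Lemma ZN_intr_eq a b :
  a%:~R = b%:~R :> 'Z_N -> exists t, a = b + t * k%:Z * n%:Z.
Proof. by move/(Zp_intr_eq N_gt1) => [t ->]; exists t; rewrite PoszM mulrA. Qed.

Lemma ZN_intr_mulkn t : (t * k%:Z * n%:Z)%:~R = 0 :> 'Z_N.
Proof. by rewrite -mulrA -PoszM Zp_intr_mulm // N_gt1. Qed.

Lemma shift_equivariant_intr u a b : shift_equivariant u ->
  a%:~R = b%:~R :> 'Z_N -> (u a)%:~R = (u b)%:~R :> 'Z_N.
Proof.
by move=> hu /ZN_intr_eq [t ->]; rewrite shift_equivariantZ // intrD ZN_intr_mulkn addr0.
Qed.

Lemma phifE u a : shift_equivariant u -> phif k n u a%:~R = (u a)%:~R.
Proof. by move=> hu; apply: shift_equivariant_intr; rewrite // intr_Zp. Qed.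

Lemma phif_natr u a : shift_equivariant u -> phif k n u a%:R = (u a)%:~R.
Proof. by move=> hu; rewrite pmulrn phifE. Qed.

Lemma phif_comp u v x : shift_equivariant u ->
  phif k n (u \o v) x = phif k n u (phif k n v x).
Proof. by move=> hu; rewrite [RHS]phifE. Qed.

Lemma phif_inj u : affperm n u -> injective (phif k n u).
Proof.
move=> /affpermP [[v uK vK] hu _] x y.
move/(shift_equivariant_intr (shift_equivariant_inv uK vK hu)).
by rewrite !uK !intr_Zp.
Qed.

Definition shift_equivariantN (p : {perm 'Z_N}) :=
  forall x, p (x + n%:R) = p x + n%:R.

Lemma sum_window_shiftN p : shift_equivariantN p ->
  \sum_(i < n) p i.+1%:R = \sum_(r < n) p r%:R + n%:R.
Proof.
move=> hp; rewrite big_ord_recr [in RHS]big_ord_recl /=.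
have -> : p n%:R = p 0%:R + n%:R by rewrite -hp add0r.
by under [in RHS]eq_bigr do rewrite /bump leq0n add1n; ring.
Qed.

Lemma SkP p : p \in Sk k n <->
  shift_equivariantN p /\ \sum_(r < n) p r%:R = ('C(n, 2))%:R.
Proof.
rewrite inE binS bin1 natrD; split.
  move=> /andP [/forallP hp /eqP hs].
  have hp' : shift_equivariantN p by move=> x; apply/eqP.
  by split=> //; apply: (addIr n%:R); rewrite -sum_window_shiftN.
move=> [hp hs]; apply/andP; split; first by apply/forallP => x; rewrite hp.
by rewrite sum_window_shiftN // hs.
Qed.

Lemma phi_in_Sk u : affperm n u ->
  exists2 p : {perm 'Z_N}, p \in Sk k n & forall x, p x = phif k n u x.
Proof.
move=> au; have /affpermP [_ hu ou] := au.
exists (perm (phif_inj au)); last by move=> x; rewrite permE.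
apply/SkP; split=> [x | ].
  have -> : x + n%:R = ((x : int) + n%:Z)%:~R by rewrite intrD intr_Zp.
  by rewrite !permE phifE // hu intrD.
under eq_bigr do rewrite permE phif_natr //.
by rewrite -mulrz_sumr; move/eqP: ou; rewrite offsetE subr_eq0 => /eqP ->.
Qed.

Definition resN (x : 'Z_N) : 'I_n := resn x.

Lemma resN_intr a : resN a%:~R = resn a.
Proof.
by rewrite /resN; have [t ->] := ZN_intr_eq (intr_Zp (a%:~R : 'Z_N)); rewrite resnDMn.
Qed.

Lemma resN_natr a : resN a%:R = a%:R.
Proof. by rewrite pmulrn resN_intr. Qed.

Lemma resN_ord (r : 'I_n) : resN r%:R = r.
Proof. by rewrite resN_natr natr_Zp. Qed.

Lemma resND x y : resN (x + y) = resN x + resN y.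
Proof. by rewrite -[x]intr_Zp -[y]intr_Zp -intrD !resN_intr resnD. Qed.

Lemma resN_eq x y : resN x = resN y -> exists t, x = y + (t * n%:Z)%:~R.
Proof.
by move/resn_eq => [t eq_xy]; exists t; rewrite -[x]intr_Zp eq_xy intrD intr_Zp.
Qed.

Lemma shift_equivariantNZ p : shift_equivariantN p ->
  forall t x, p (x + (t * n%:Z)%:~R) = p x + (t * n%:Z)%:~R.
Proof.
move=> hp; have hnat (q : nat) x : p (x + (q%:Z * n%:Z)%:~R) = p x + (q%:Z * n%:Z)%:~R.
  elim: q x => [|q IHq] x; first by rewrite mul0r !addr0.
  by rewrite intS mulrDl mul1r !intrD addrA IHq -pmulrn hp -addrA.
move=> t x; have [t_ge0 | t_lt0] := leP 0 t; first by rewrite -(gez0_abs t_ge0).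
have := hnat `|t|%N (x + (t * n%:Z)%:~R); rewrite ltz0_abs // -addrA -intrD.
have -> : t * n%:Z + - t * n%:Z = 0 by ring.
rewrite mulr0z addr0 => ->; rewrite -addrA -intrD.
have -> : - t * n%:Z + t * n%:Z = 0 by ring.
by rewrite mulr0z addr0.
Qed.

Lemma Sk_window_inj p : p \in Sk k n -> injective (fun r : 'I_n => resN (p r%:R)).
Proof.
move=> /SkP [hp _] r s /resN_eq [t]; rewrite -shift_equivariantNZ // => /perm_inj.
by move/(congr1 resN); rewrite resND !resN_ord resN_intr resnMn addr0.
Qed.

Lemma window_perm_eq p q : shift_equivariantN p -> shift_equivariantN q ->
  (forall r : 'I_n, p r%:R = q r%:R) -> p = q.
Proof.
move=> hp hq eq_pq; apply/permP => x.
have [t ->] := resN_eq (esym (resN_ord (resN x))).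
by rewrite !shift_equivariantNZ // eq_pq.
Qed.

Lemma lift_window (g : 'I_n -> 'Z_N) :
  injective (fun r => resN (g r)) -> \sum_r g r = ('C(n, 2))%:R ->
  exists2 u, affperm n u & forall r : 'I_n, (u r)%:~R = g r.
Proof.
move=> g_inj g_sum.
(* Correcting the entry at [ord0] by the multiple [c] of kn makes the offset 0. *)
pose c : int := ('C(n, 2))%:Z - \sum_(r < n) (g r : int).
have c0 : c%:~R = 0 :> 'Z_N.
  by rewrite intrB mulrz_sumr; under eq_bigr do rewrite intr_Zp; rewrite g_sum subrr.
pose F r : int := (g r : int) + (if r == ord0 then c else 0).
have F_g r : (F r)%:~R = g r.
  by rewrite intrD intr_Zp; case: (r == ord0); rewrite ?c0 ?mulr0z addr0.
exists (window_ext F); last by move=> r; rewrite window_ext_ord.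
apply/affpermP; split; [|exact: window_ext_equivariant|].
  by apply: window_ext_bij => r s; rewrite -!resN_intr !F_g => /g_inj.
rewrite offset_window_ext big_split /= -big_mkcond big_pred1_eq /c; ring.
Qed.

Lemma Sk_lift p : p \in Sk k n ->
  exists2 u, affperm n u & forall x, p x = phif k n u x.
Proof.
move=> Sk_p; have /SkP [hp p_sum] := Sk_p.
have [u au u_win] := lift_window (Sk_window_inj Sk_p) p_sum.
have [q Sk_q q_phi] := phi_in_Sk au.
exists u => // x; suff -> : p = q by [].
apply: window_perm_eq hp (proj1 (proj1 (SkP q) Sk_q)) _ => r.
by rewrite q_phi phif_natr ?u_win //; case/affpermP: au.
Qed.

Lemma phif_id x : phif k n id x = x.
Proof. exact: intr_Zp. Qed.

Lemma Sk_group : group_set (Sk k n).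
Proof.
apply/group_setP; split.
  have [q Sk_q q_id] := phi_in_Sk (affperm_id n').
  by suff -> : 1%g = q by []; apply/permP => x; rewrite q_id perm1 phif_id.
move=> p q Sk_p Sk_q.
have [u au p_u] := Sk_lift Sk_p; have [v av q_v] := Sk_lift Sk_q.
have [r Sk_r r_vu] := phi_in_Sk (affperm_comp av au).
suff -> : (p * q)%g = r by [].
by apply/permP => x; rewrite r_vu permM p_u q_v phif_comp //; case/affpermP: av.
Qed.

Lemma phif_eq_coset u v : affperm n u -> affperm n v ->
  (forall x, phif k n u x = phif k n v x) <->
  exists2 w, kerphi k n w & forall j, u j = w (v j).
Proof.
move=> au av; have /affpermP [_ hu _] := au; have /affpermP [[v' vK v'K] hv _] := av.
split=> [eq_uv | [w [aw w_ker] u_wv] x].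
  exists (u \o v'); last by move=> j /=; rewrite vK.
  split; first exact/affperm_comp/(affperm_inv vK v'K).
  by move=> x; rewrite phif_comp // eq_uv -phif_comp // /phif /= v'K intr_Zp.
have /affpermP [_ hw _] := aw.
by rewrite [LHS]/phif u_wv -[LHS]/(phif k n (w \o v) x) phif_comp ?w_ker.
Qed.

Lemma kerphi_Kgen_id i u : (i < n)%N -> kerphi k n u -> Kgen n i u ->
  forall j, u j = j.
Proof.
move=> i_lt [au u_ker] Ku; have /affpermP [_ hu _] := au.
have fix_window x : in_window i x -> u x = x.
  move=> x_win; have ux_win : in_window i (u x) by rewrite (Kgen_in_window i_lt Ku).
  have : (u x)%:~R = x%:~R :> 'Z_N by rewrite -phifE ?u_ker.
  move=> /ZN_intr_eq [t ux]; move: ux_win x_win; rewrite ux /in_window.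
  (* [x] and [x + m n] both lie in (i, i+n], of width n. *)
  set m := t * k%:Z => /andP [? ?] /andP [? ?].
  suff -> : m = 0 by rewrite mul0r addr0.
  nia.
move=> j; have [t jt_win] := in_window_translate n' i j.
by move: (fix_window _ jt_win); rewrite shift_equivariantZ // => /addIr.
Qed.

Definition Sk_windows : {set {ffun 'I_n -> 'Z_N}} :=
  [set g : {ffun 'I_n -> 'Z_N} |
     injectiveb (fun r => resN (g r)) & \sum_r g r == ('C(n, 2))%:R].

Definition perm_window (p : {perm 'Z_N}) : {ffun 'I_n -> 'Z_N} :=
  [ffun r : 'I_n => p r%:R].

Lemma perm_window_Sk : perm_window @: Sk k n = Sk_windows.
Proof.
apply/setP => g; apply/imsetP/idP => [[p Sk_p ->] | ].
  have /SkP [_ p_sum] := Sk_p; rewrite inE; apply/andP; split.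
    by apply/injectiveP => r s; rewrite !ffunE; apply: (Sk_window_inj Sk_p).
  by apply/eqP; under eq_bigr do rewrite ffunE.
rewrite inE => /andP [/injectiveP g_inj /eqP g_sum].
have [u au u_win] := lift_window g_inj g_sum.
have [q Sk_q q_phi] := phi_in_Sk au.
exists q => //; apply/ffunP => r.
by rewrite ffunE q_phi phif_natr ?u_win //; case/affpermP: au.
Qed.

Lemma card_Sk_windows : #|Sk k n| = #|Sk_windows|.
Proof.
rewrite -perm_window_Sk card_in_imset // => p q /SkP [hp _] /SkP [hq _] /ffunP eq_pq.
by apply: window_perm_eq hp hq _ => r; have := eq_pq r; rewrite !ffunE.
Qed.

Definition join_window (x : {ffun 'I_n -> 'I_n} * {ffun 'I_n -> 'I_k}) :
  {ffun 'I_n -> 'Z_N} := [ffun r => (x.1 r + n * x.2 r)%:R].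

Lemma resN_join_window x r : resN (join_window x r) = x.1 r.
Proof.
by rewrite ffunE resN_natr natrD natrM (@pchar_Zp n) // mul0r addr0 natr_Zp.
Qed.

Lemma join_window_inj : injective join_window.
Proof.
move=> [s l] [s' l'] eq_sl.
have eq_s r : s r = s' r by rewrite -(resN_join_window (s, l)) eq_sl resN_join_window.
have bound (a : 'I_n) (b : 'I_k) : (a + n * b < N)%N.
  by have := ltn_ord a; have := ltn_ord b; nia.
have eq_l r : l r = l' r.
  have /ffunP/(_ r) := eq_sl; rewrite !ffunE /= eq_s.
  move/(Zp_natr_inj N_gt1 (bound _ _) (bound _ _))/addnI/eqP.
  by rewrite eqn_mul2l /= => /eqP /val_inj.
by congr pair; apply/ffunP.
Qed.

Lemma join_window_bij : bijective join_window.
Proof.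
apply: (inj_card_bij join_window_inj).
by rewrite card_prod !card_ffun !card_ord (Zp_cast N_gt1) expnMn mulnC.
Qed.

Lemma join_window_preimage : join_window @^-1: Sk_windows =
  setX [set s : {ffun 'I_n -> 'I_n} | injectiveb s]
       [set l : {ffun 'I_n -> 'I_k} | (k %| \sum_r l r)%N].
Proof.
apply/setP => -[s l]; rewrite !inE /=.
rewrite (eq_injectiveb (resN_join_window (s, l))); case s_inj: (injectiveb s) => //=.
have sum_s : (\sum_r (s r : nat) = 'C(n, 2))%N.
  by rewrite -bin2_sum big_mkord [RHS](reindex_inj (injectiveP _ s_inj)).
under eq_bigr do rewrite ffunE.
rewrite -natr_sum big_split /= -big_distrr /= sum_s natrD -subr_eq0 addrAC subrr add0r.
by rewrite Zp_natr_eq0 ?N_gt1 // mulnC dvdn_pmul2l.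
Qed.

Lemma card_Sk : #|Sk k n| = (k ^ n'.+1 * n`!)%N.
Proof.
rewrite card_Sk_windows -(on_card_preimset (onW_bij _ join_window_bij)).
by rewrite join_window_preimage cardsX card_inj_ffuns !card_ord ffactnn
  card_ffun_sum_dvdn // mulnC.
Qed.

End Reduction.

Theorem mainTheorem6 (n k : nat) (hn : (2 <= n)%N) (hk : (1 <= k)%N) :
  (* (1) \tilde S_n(k) is a group under composition *)
  group_set (Sk k n) /\
  (* (2a) phi is well defined: phi(u) lies in \tilde S_n(k) *)
  (forall u, affperm n u ->
     exists2 p : {perm 'Z_(k * n)}, p \in Sk k n &
       forall x, p x = phif k n u x) /\
  (* (2b) phi is a homomorphism *)
  (forall u v, affperm n u -> affperm n v ->
     forall x, phif k n (u \o v) x = phif k n u (phif k n v x)) /\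
  (* (2c) \tilde S_n / ker phi ~= \tilde S_n(k): phi is onto ... *)
  (forall p, p \in Sk k n ->
     exists2 u, affperm n u & forall x, p x = phif k n u x) /\
  (* ... and phi u = phi v iff u and v lie in the same coset of ker phi *)
  (forall u v, affperm n u -> affperm n v ->
     ((forall x, phif k n u x = phif k n v x) <->
      exists2 w, kerphi k n w & forall j, u j = w (v j))) /\
  (* (3) N \cap K_{i} = {e} *)
  (forall i, (i < n)%N -> forall u, kerphi k n u -> Kgen n i u ->
     forall j, u j = j) /\
  (* (4) cardinality *)
  #|Sk k n| = (k ^ (n - 1) * n`!)%N.
Proof.
case: n hn => [|[|n']] // _.
split; first exact: Sk_group.
split; first by move=> u; exact: phi_in_Sk.
split; first by move=> u v /affpermP [_ hu _] _ x; exact: phif_comp.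
split; first by move=> p; exact: Sk_lift.
split; first by move=> u v; exact: phif_eq_coset.
split; first by move=> i i_lt u; exact: kerphi_Kgen_id.
by rewrite card_Sk // subn1.
Qed.
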